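(* Let $\lambda\neq0$ and $\xi=e_{12}-e_{14}+\lambda e_2$. On $\mathbb R^4$ use the global coordinates $\tilde x^1=2\lambda x^1+(x^2+x^4)^2$, $\tilde x^2=(x^2+x^4)/\lambda$, $\tilde x^3=x^3$, $\tilde x^4=\lambda x^4+x^1(x^2+x^4)+(x^2+x^4)^3/(3\lambda)$. Then a smooth covector field $A$ on $\mathbb R^4$ satisfies $L_\xi A=0$ if and only if there are smooth functions $C_1,C_2,C_3,B$ of $(\tilde x^1,\tilde x^3,\tilde x^4)\in\mathbb R^3$ such that $$A_1=C_2\tilde x^2+C_3,\quad A_2=\tfrac12C_2(\tilde x^2)^2+C_3\tilde x^2+C_1,\quad A_3=B,\quad A_4=A_2+C_2 .$$
   Context: Work in $\mathbb R^4$ with Galilean (Cartesian) coordinates $x^1,x^2,x^3,x^4$ of Minkowski space (metric $\mathrm{diag}(-1,-1,-1,1)$). A potential on an open set $U\subseteq\mathbb R^4$ is a smooth covector field $A=A_i\,dx^i$; its components $A_i$ are always those with respect to the coordinates $x^i$, even when written as functions of other variables. For a vector field $\xi=\xi^k\partial_k$ the Lie derivative is $(L_\xi A)_i=\xi^k\partial_kA_i+A_k\partial_i\xi^k$. The vector fields used are, by components $(\xi^1,\xi^2,\xi^3,\xi^4)$: $e_1=(1,0,0,0)$, $e_2=(0,1,0,0)$, $e_3=(0,0,1,0)$, $e_4=(0,0,0,1)$, $e_{12}=(-x^2,x^1,0,0)$, $e_{13}=(x^3,0,-x^1,0)$, $e_{23}=(0,-x^3,x^2,0)$, $e_{14}=(x^4,0,0,x^1)$,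 $e_{24}=(0,x^4,0,x^2)$, $e_{34}=(0,0,x^4,x^3)$. A potential admits a family of vector fields if $L_\xi A=0$ for each $\xi$ in it (equivalently for every element of their linear span). ''Functions'' are smooth real functions; $\mathrm{ch}=\cosh$, $\mathrm{sh}=\sinh$. *)

From Stdlib Require Import Reals.
From Coquelicot Require Import Coquelicot.
Open Scope R_scope.

Definition R4 : Type := (R * R * R * R)%type.
Definition R3 : Type := (R * R * R)%type.

Definition coord4 (i : nat) (x : R4) : R :=
  let '(a, b, c, d) := x in
  match i with 1 => a | 2 => b | 3 => c | 4 => d | _ => 0 end.

Definition set4 (i : nat) (t : R) (x : R4) : R4 :=
  let '(a, b, c, d) := x in
  match i with
  | 1 => (t, b, c, d) | 2 => (a, t, c, d)
  | 3 => (a, b, t, d) | 4 => (a, b, c, t) | _ => x end.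

Definition coord3 (i : nat) (x : R3) : R :=
  let '(a, b, c) := x in
  match i with 1 => a | 2 => b | 3 => c | _ => 0 end.

Definition set3 (i : nat) (t : R) (x : R3) : R3 :=
  let '(a, b, c) := x in
  match i with
  | 1 => (t, b, c) | 2 => (a, t, c) | 3 => (a, b, t) | _ => x end.

Definition pd4 (i : nat) (f : R4 -> R) (x : R4) : R :=
  Derive (fun t => f (set4 i t x)) (coord4 i x).
Definition pd3 (i : nat) (f : R3 -> R) (x : R3) : R :=
  Derive (fun t => f (set3 i t x)) (coord3 i x).

Fixpoint Ck4 (k : nat) (f : R4 -> R) : Prop :=
  (forall x, continuous f x) /\
  match k with
  | O => True
  | S k' => (forall i x, (1 <= i <= 4)%nat -> ex_derive (fun t => f (set4 i t x)) (coord4 i x))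
            /\ (forall i, (1 <= i <= 4)%nat -> Ck4 k' (pd4 i f))
  end.
Fixpoint Ck3 (k : nat) (f : R3 -> R) : Prop :=
  (forall x, continuous f x) /\
  match k with
  | O => True
  | S k' => (forall i x, (1 <= i <= 3)%nat -> ex_derive (fun t => f (set3 i t x)) (coord3 i x))
            /\ (forall i, (1 <= i <= 3)%nat -> Ck3 k' (pd3 i f))
  end.

Definition smooth4 (f : R4 -> R) : Prop := forall k, Ck4 k f.
Definition smooth3 (f : R3 -> R) : Prop := forall k, Ck3 k f.

(* Vector fields / covector fields: component functions indexed 1..4. *)
Definition field := nat -> R4 -> R.

Definition lie (xi A : field) (i : nat) (x : R4) : R :=
  sum_f 1 4 (fun k => xi k x * pd4 k (A i) x + A k x * pd4 i (xi k) x).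

Definition vf_of (f1 f2 f3 f4 : R4 -> R) : field :=
  fun k => match k with 1 => f1 | 2 => f2 | 3 => f3 | 4 => f4 | _ => fun _ => 0 end.

Definition x1 (x : R4) := coord4 1 x.
Definition x2 (x : R4) := coord4 2 x.
Definition x3 (x : R4) := coord4 3 x.
Definition x4 (x : R4) := coord4 4 x.

Definition e2 : field := vf_of (fun _ => 0) (fun _ => 1) (fun _ => 0) (fun _ => 0).
Definition e12 : field := vf_of (fun x => - x2 x) x1 (fun _ => 0) (fun _ => 0).
Definition e14 : field := vf_of x4 (fun _ => 0) (fun _ => 0) x1.

Definition vf_add (u v : field) : field := fun k x => u k x + v k x.
Definition vf_scal (c : R) (u : field) : field := fun k x => c * u k x.

Definition xi_field (lam : R) : field :=
  vf_add (vf_add e12 (vf_scal (-1) e14)) (vf_scal lam e2).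

Definition tx1 (lam : R) (x : R4) := 2 * lam * x1 x + (x2 x + x4 x) ^ 2.
Definition tx2 (lam : R) (x : R4) := (x2 x + x4 x) / lam.
Definition tx3 (lam : R) (x : R4) := x3 x.
Definition tx4 (lam : R) (x : R4) :=
  lam * x4 x + x1 x * (x2 x + x4 x) + (x2 x + x4 x) ^ 3 / (3 * lam).

(* The field xi = (-(x2 + x4), x1 + lam, 0, -x1) is affine with an explicit polynomial
   flow, along which tx1, tx3, tx4 are constant while tx2 increases with unit speed; every
   point x is reached at time tx2 x from the slice parametrised by Psi.  Writing
   L_xi A = d/dt (A o flow) + (d xi)^T A, the equation L_xi A = 0 becomes the linear ODE
   A1' = A4 - A2, A2' = A4' = A1, A3' = 0 along each orbit, whose solutions are the stated
   polynomials in tx2 with coefficients read off at the slice, i.e. C o (tx1, tx3, tx4)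
   with C = A o Psi; these are smooth since Psi is affine.  The only analytic input is the
   chain rule for functions with continuous partial derivatives, proved from the mean
   value theorem one coordinate at a time. *)

From Stdlib Require Import Reals Lra Lia FunctionalExtensionality.
From Coquelicot Require Import Coquelicot.
Open Scope R_scope.

Lemma continuous_of_is_derive (g : R -> R) t dg : is_derive g t dg -> continuous g t.
Proof.
  intros Hg; apply (ex_derive_continuous (K := R_AbsRing) (V := R_NormedModule)).
  eexists; exact Hg.
Qed.

Lemma mvt_increment (h dh : R -> R) a b :
  (forall s, is_derive h s (dh s)) ->
  exists c, Rabs (c - a) <= Rabs (b - a) /\ h b - h a = dh c * (b - a).
Proof.
  intros Hh.
  destruct (MVT_gen h a b dh) as [c [Hc Heq]].
  - intros s _; apply Hh.
  - intros s _; apply continuity_pt_filterlim, (continuous_of_is_derive _ _ _ (Hh s)).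
  - exists c; split; [|exact Heq].
    revert Hc; unfold Rmin, Rmax.
    destruct (Rle_dec a b); intros Hc; [rewrite !Rabs_right by lra|rewrite !Rabs_left1 by lra]; lra.
Qed.

Lemma is_derive_0_const (h : R -> R) :
  (forall s, is_derive h s 0) -> forall t, h t = h 0.
Proof.
  intros Hh t.
  destruct (mvt_increment h (fun _ => 0) 0 t Hh) as [c [_ Heq]]; lra.
Qed.

Lemma is_derive_eq (f : R -> R) x l l' : l = l' -> is_derive f x l -> is_derive f x l'.
Proof. now intros <-. Qed.

Lemma continuous_pair {U V W : UniformSpace} (a : U -> V) (b : U -> W) x :
  continuous a x -> continuous b x -> continuous (fun y => (a y, b y)) x.
Proof.
  intros Ha Hb; apply filterlim_locally; intros eps.
  generalize (filter_and _ _ (proj1 (filterlim_locally _ _) Ha eps)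
                             (proj1 (filterlim_locally _ _) Hb eps)).
  apply filter_imp; intros y [H1 H2]; split; assumption.
Qed.

Lemma Rmult_approx P0 Q0 e : 0 < e ->
  exists eta, 0 < eta /\ forall P Q,
    Rabs (P - P0) < eta -> Rabs (Q - Q0) < eta -> Rabs (P * Q - P0 * Q0) < e.
Proof.
  intros He.
  set (M := Rabs P0 + Rabs Q0 + 2).
  assert (HM : 2 <= M) by (unfold M; pose proof (Rabs_pos P0); pose proof (Rabs_pos Q0); lra).
  exists (Rmin 1 (e / M)); split.
  { apply Rmin_pos; [lra|]. apply Rdiv_lt_0_compat; lra. }
  intros P Q HP HQ.
  pose proof (Rmin_l 1 (e / M)); pose proof (Rmin_r 1 (e / M)).
  assert (HQ1 : Rabs Q <= Rabs Q0 + 1).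
  { replace Q with (Q0 + (Q - Q0)) by ring.
    pose proof (Rabs_triang Q0 (Q - Q0)); lra. }
  replace (P * Q - P0 * Q0) with ((P - P0) * Q + P0 * (Q - Q0)) by ring.
  eapply Rle_lt_trans; [apply Rabs_triang|]. rewrite !Rabs_mult.
  assert (Hb : Rabs (P - P0) * Rabs Q + Rabs P0 * Rabs (Q - Q0)
               <= Rmin 1 (e / M) * (M - 1)).
  { pose proof (Rabs_pos (P - P0)); pose proof (Rabs_pos P0); pose proof (Rabs_pos Q).
    apply Rle_trans with (Rmin 1 (e / M) * (Rabs Q0 + 1) + Rabs P0 * Rmin 1 (e / M));
      [|right; unfold M; ring].
    apply Rplus_le_compat; [apply Rmult_le_compat|apply Rmult_le_compat_l]; lra. }
  assert (Hm : e / M * (M - 1) < e).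
  { apply Rmult_lt_reg_r with M; [lra|].
    replace (e / M * (M - 1) * M) with (e * (M - 1)) by (field; lra). nra. }
  pose proof (Rmult_le_compat_r (M - 1) _ _ ltac:(lra) (Rmin_r 1 (e / M))). lra.
Qed.

Lemma is_derive_increment {V : UniformSpace} (F dF : R -> V -> R) (g : R -> R) (q : R -> V) t0 dg :
  (forall s w, is_derive (fun s => F s w) s (dF s w)) ->
  continuous (fun p : R * V => dF (fst p) (snd p)) (g t0, q t0) ->
  is_derive g t0 dg -> continuous q t0 ->
  is_derive (fun t => F (g t) (q t) - F (g t0) (q t)) t0 (dF (g t0) (q t0) * dg).
Proof.
  intros HF HdF Hg Hq.
  pose proof Hg as Hg_lim; apply is_derive_Reals in Hg_lim.
  apply is_derive_Reals; intros e He.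
  destruct (Rmult_approx (dF (g t0) (q t0)) dg e He) as [eta [Heta Happrox]].
  destruct (proj1 (filterlim_locally _ _) HdF (mkposreal eta Heta)) as [d HdF_ball].
  destruct (Hg_lim eta Heta) as [d1 Hd1].
  destruct (proj1 (filterlim_locally _ _) (continuous_of_is_derive _ _ _ Hg) d) as [d2 Hd2].
  destruct (proj1 (filterlim_locally _ _) Hq d) as [d3 Hd3].
  assert (Hpos : 0 < Rmin d1 (Rmin d2 d3)).
  { repeat apply Rmin_pos; apply cond_pos. }
  exists (mkposreal _ Hpos); intros u Hu0 Hu; simpl in Hu.
  pose proof (Rmin_l d1 (Rmin d2 d3)); pose proof (Rmin_r d1 (Rmin d2 d3)).
  pose proof (Rmin_l d2 d3); pose proof (Rmin_r d2 d3).
  set (w := q (t0 + u)).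
  destruct (mvt_increment (fun s => F s w) (fun s => dF s w) (g t0) (g (t0 + u)))
    as [c [Hc Heq]]; [intros s; apply HF|].
  cbv beta in Heq |- *. fold w. rewrite Heq.
  replace ((dF c w * (g (t0 + u) - g t0) - (F (g t0) (q t0) - F (g t0) (q t0))) / u)
    with (dF c w * ((g (t0 + u) - g t0) / u)) by (field; exact Hu0).
  apply Happrox.
  - apply (HdF_ball (c, w)); split; simpl.
    + assert (Hgu : Rabs (g (t0 + u) - g t0) < d).
      { apply (Hd2 (t0 + u)). change (Rabs (t0 + u - t0) < d2).
        replace (t0 + u - t0) with u by ring. lra. }
      change (Rabs (c - g t0) < d). lra.
    + apply Hd3. change (Rabs (t0 + u - t0) < d3). replace (t0 + u - t0) with u by ring. lra.
  - apply Hd1; [exact Hu0|lra].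
Qed.

Lemma set4_set4 j s t x : set4 j t (set4 j s x) = set4 j t x.
Proof. destruct x as [[[a b] c] d]; destruct j as [|[|[|[|[|j]]]]]; reflexivity. Qed.

Lemma coord4_set4 j t x : (1 <= j <= 4)%nat -> coord4 j (set4 j t x) = t.
Proof. intros Hj; destruct x as [[[a b] c] d]; destruct j as [|[|[|[|[|j]]]]]; try lia; reflexivity. Qed.

Lemma ball_set4 j s s' w w' e :
  ball s e s' -> ball w e w' -> ball (set4 j s w) e (set4 j s' w').
Proof.
  destruct w as [[[a b] c] d], w' as [[[a' b'] c'] d'].
  intros Hs [[[Ha Hb] Hc] Hd].
  destruct j as [|[|[|[|[|j]]]]]; repeat split; assumption.
Qed.

Lemma continuous_set4 (h : R4 -> R) j s w :
  continuous h (set4 j s w) ->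
  continuous (fun p : R * R4 => h (set4 j (fst p) (snd p))) (s, w).
Proof.
  intros Hh; apply filterlim_locally; intros eps.
  destruct (proj1 (filterlim_locally _ _) Hh eps) as [d Hd].
  exists d; intros [s' w'] [Hs Hw]; apply Hd, ball_set4; assumption.
Qed.

Lemma is_derive_pd4 f j w s : Ck4 1 f -> (1 <= j <= 4)%nat ->
  is_derive (fun t => f (set4 j t w)) s (pd4 j f (set4 j s w)).
Proof.
  intros [_ [Hex _]] Hj.
  specialize (Hex j (set4 j s w) Hj).
  unfold pd4; rewrite coord4_set4 in * by exact Hj.
  rewrite (Derive_ext _ (fun t => f (set4 j t w))) by (intros t; now rewrite set4_set4).
  apply Derive_correct; revert Hex; apply ex_derive_ext; intros t; now rewrite set4_set4.
Qed.

Lemma is_derive_increment4 f j g q t0 dg : Ck4 1 f -> (1 <= j <= 4)%nat ->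
  is_derive g t0 dg -> continuous q t0 ->
  is_derive (fun t => f (set4 j (g t) (q t)) - f (set4 j (g t0) (q t))) t0
    (pd4 j f (set4 j (g t0) (q t0)) * dg).
Proof.
  intros Hf Hj Hg Hq.
  apply (is_derive_increment (fun s w => f (set4 j s w)) (fun s w => pd4 j f (set4 j s w)));
    [intros s w; now apply is_derive_pd4| |exact Hg|exact Hq].
  apply continuous_set4, (proj1 (proj2 (proj2 Hf) j Hj)).
Qed.

Lemma is_derive_comp4 f g1 g2 g3 g4 t0 d1 d2 d3 d4 : Ck4 1 f ->
  is_derive g1 t0 d1 -> is_derive g2 t0 d2 -> is_derive g3 t0 d3 -> is_derive g4 t0 d4 ->
  let z0 := (g1 t0, g2 t0, g3 t0, g4 t0) in
  is_derive (fun t => f (g1 t, g2 t, g3 t, g4 t)) t0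
    (pd4 1 f z0 * d1 + pd4 2 f z0 * d2 + pd4 3 f z0 * d3 + pd4 4 f z0 * d4).
Proof.
  intros Hf D1 D2 D3 D4 z0.
  pose proof (continuous_of_is_derive _ _ _ D2) as C2.
  pose proof (continuous_of_is_derive _ _ _ D3) as C3.
  pose proof (continuous_of_is_derive _ _ _ D4) as C4.
  (* Telescoping sum of four increments, the j-th moving only the j-th coordinate;
     the [0] in slot j of each base point is a dummy, overwritten by [set4 j]. *)
  pose proof (is_derive_increment4 f 1 g1 (fun t => (0, g2 t, g3 t, g4 t)) t0 d1 Hf
                ltac:(lia) D1 ltac:(repeat apply continuous_pair; auto using continuous_const)) as T1.
  pose proof (is_derive_increment4 f 2 g2 (fun t => (g1 t0, 0, g3 t, g4 t)) t0 d2 Hf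
                ltac:(lia) D2 ltac:(repeat apply continuous_pair; auto using continuous_const)) as T2.
  pose proof (is_derive_increment4 f 3 g3 (fun t => (g1 t0, g2 t0, 0, g4 t)) t0 d3 Hf
                ltac:(lia) D3 ltac:(repeat apply continuous_pair; auto using continuous_const)) as T3.
  pose proof (is_derive_increment4 f 4 g4 (fun t => (g1 t0, g2 t0, g3 t0, 0)) t0 d4 Hf
                ltac:(lia) D4 ltac:(repeat apply continuous_pair; auto using continuous_const)) as T4.
  simpl in T1, T2, T3, T4.
  pose proof (is_derive_plus _ _ _ _ _ (is_derive_plus _ _ _ _ _
    (is_derive_plus _ _ _ _ _ (is_derive_plus _ _ _ _ _ T1 T2) T3) T4)
    (is_derive_const (f z0) t0)) as T.
  eapply is_derive_ext; [|eapply is_derive_eq; [|exact T]].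
  - intros t; unfold plus, z0; simpl; ring.
  - unfold plus, zero, z0; simpl; ring.
Qed.

Definition deriv_along (xi : field) (f : R4 -> R) (x : R4) : R :=
  sum_f 1 4 (fun k => xi k x * pd4 k f x).

Lemma lie_deriv_along xi A i x :
  lie xi A i x = deriv_along xi (A i) x + sum_f 1 4 (fun k => A k x * pd4 i (xi k) x).
Proof. unfold lie, deriv_along, sum_f; simpl; ring. Qed.

Definition dxi (i k : nat) : R :=
  match i, k with
  | 1%nat, 2%nat => 1 | 1%nat, 4%nat => -1 | 2%nat, 1%nat => -1 | 4%nat, 1%nat => -1
  | _, _ => 0
  end.

Lemma pd4_xi_field lam i k x : pd4 i (xi_field lam k) x = dxi i k.
Proof.
  destruct x as [[[a b] c] d]; unfold pd4; apply is_derive_unique.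
  unfold xi_field, vf_add, vf_scal, e12, e14, e2, vf_of, x1, x2, x3, x4.
  destruct i as [|[|[|[|[|i]]]]], k as [|[|[|[|[|k]]]]]; simpl;
    auto_derive; auto; simpl; ring.
Qed.

Definition xi_coupling (v : nat -> R) (i : nat) : R :=
  match i with
  | 1%nat => v 2%nat - v 4%nat
  | 2%nat | 4%nat => - v 1%nat
  | _ => 0
  end.

Lemma lie_xi_field lam A i x :
  lie (xi_field lam) A i x
  = deriv_along (xi_field lam) (A i) x + xi_coupling (fun k => A k x) i.
Proof.
  rewrite lie_deriv_along; f_equal.
  unfold sum_f; simpl; rewrite !pd4_xi_field.
  destruct i as [|[|[|[|[|i]]]]]; simpl; ring.
Qed.

Definition flow (lam : R) (x : R4) (t : R) : R4 :=
  (x1 x - (x2 x + x4 x) * t - lam * t ^ 2 / 2,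
   x2 x + lam * t + x1 x * t - (x2 x + x4 x) * t ^ 2 / 2 - lam * t ^ 3 / 6,
   x3 x,
   x4 x - x1 x * t + (x2 x + x4 x) * t ^ 2 / 2 + lam * t ^ 3 / 6).

Lemma is_derive_along_flow lam f p t : Ck4 1 f ->
  is_derive (fun t => f (flow lam p t)) t (deriv_along (xi_field lam) f (flow lam p t)).
Proof.
  intros Hf; unfold flow.
  eapply is_derive_eq; [|apply is_derive_comp4; [exact Hf|..]; auto_derive; auto; reflexivity].
  unfold deriv_along, sum_f, xi_field, vf_add, vf_scal, e12, e14, e2, vf_of, x1, x2, x3, x4.
  simpl; field.
Qed.

Lemma flow0 lam x : flow lam x 0 = x.
Proof.
  destruct x as [[[a b] c] d]; unfold flow, x1, x2, x3, x4; simpl.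
  repeat match goal with |- (_, _) = (_, _) => f_equal end; field.
Qed.

Definition transport_ode (a : nat -> R -> R) : Prop :=
  forall i t, (1 <= i <= 4)%nat -> is_derive (a i) t (- xi_coupling (fun k => a k t) i).

Lemma lie_zero_iff_transport_ode lam (A : field) :
  (forall i, (1 <= i <= 4)%nat -> Ck4 1 (A i)) ->
  (forall i x, (1 <= i <= 4)%nat -> lie (xi_field lam) A i x = 0) <->
  forall p, transport_ode (fun i t => A i (flow lam p t)).
Proof.
  intros HA; split.
  - intros Hlie p i t Hi.
    eapply is_derive_eq; [|now apply is_derive_along_flow, HA].
    specialize (Hlie i (flow lam p t) Hi); rewrite lie_xi_field in Hlie; lra.
  - intros Hode i x Hi; rewrite lie_xi_field.
    pose proof (is_derive_unique _ _ _ (is_derive_along_flow lam (A i) x 0 (HA i Hi))) as E1.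
    pose proof (is_derive_unique _ _ _ (Hode x i 0 Hi)) as E2.
    simpl in E2; rewrite flow0 in E1, E2.
    assert (E : deriv_along (xi_field lam) (A i) x = - xi_coupling (fun k => A k x) i)
      by (rewrite <- E1; exact E2).
    lra.
Qed.

Lemma transport_ode_solution a : transport_ode a -> forall t,
  let c := a 4%nat 0 - a 2%nat 0 in
  a 1%nat t = c * t + a 1%nat 0 /\
  a 2%nat t = / 2 * c * t ^ 2 + a 1%nat 0 * t + a 2%nat 0 /\
  a 3%nat t = a 3%nat 0 /\
  a 4%nat t = a 2%nat t + c.
Proof.
  intros Ha t c.
  assert (D1 : forall s, is_derive (a 1%nat) s (a 4%nat s - a 2%nat s))
    by (intros s; eapply is_derive_eq; [|apply Ha; lia]; simpl; ring).
  assert (D2 : forall s, is_derive (a 2%nat) s (a 1%nat s))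
    by (intros s; eapply is_derive_eq; [|apply Ha; lia]; simpl; ring).
  assert (D3 : forall s, is_derive (a 3%nat) s 0)
    by (intros s; eapply is_derive_eq; [|apply Ha; lia]; simpl; ring).
  assert (D4 : forall s, is_derive (a 4%nat) s (a 1%nat s))
    by (intros s; eapply is_derive_eq; [|apply Ha; lia]; simpl; ring).
  assert (H4 : forall s, a 4%nat s - a 2%nat s = c).
  { intros s; apply (is_derive_0_const (fun s => a 4%nat s - a 2%nat s)); intros r.
    eapply is_derive_eq; [|apply (is_derive_minus _ _ _ _ _ (D4 r) (D2 r))].
    unfold minus, plus, opp; simpl; ring. }
  assert (H1 : forall s, a 1%nat s - c * s = a 1%nat 0).
  { intros s; rewrite (is_derive_0_const (fun s => a 1%nat s - c * s)); [simpl; ring|].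
    intros r; eapply is_derive_eq;
      [|apply (is_derive_minus _ (fun s => c * s) _ _ c (D1 r)); auto_derive; auto; ring].
    rewrite H4; unfold minus, plus, opp; simpl; ring. }
  assert (H2 : forall s, a 2%nat s - (/ 2 * c * s ^ 2 + a 1%nat 0 * s) = a 2%nat 0).
  { intros s.
    rewrite (is_derive_0_const (fun s => a 2%nat s - (/ 2 * c * s ^ 2 + a 1%nat 0 * s)));
      [simpl; ring|].
    intros r; eapply is_derive_eq;
      [|apply (is_derive_minus _ (fun s => / 2 * c * s ^ 2 + a 1%nat 0 * s) _ _
               (c * r + a 1%nat 0) (D2 r)); auto_derive; auto; field].
    pose proof (H1 r); unfold minus, plus, opp; simpl; field_simplify; lra. }
  pose proof (H1 t); pose proof (H2 t); pose proof (H4 t).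
  pose proof (is_derive_0_const _ D3 t).
  repeat split; lra.
Qed.

Lemma transport_ode_of_closed_form c1 c2 c3 b T (a : nat -> R -> R) :
  (forall t,
    a 1%nat t = c2 * (T + t) + c3 /\
    a 2%nat t = / 2 * c2 * (T + t) ^ 2 + c3 * (T + t) + c1 /\
    a 3%nat t = b /\
    a 4%nat t = a 2%nat t + c2) ->
  transport_ode a.
Proof.
  intros Ha.
  assert (E4 : forall s, a 4%nat s = / 2 * c2 * (T + s) ^ 2 + c3 * (T + s) + c1 + c2)
    by (intros s; destruct (Ha s) as (_ & E2 & _ & E4); lra).
  intros i t Hi; destruct (Ha t) as (E1 & E2 & _ & _).
  destruct i as [|[|[|[|[|i]]]]]; try lia; simpl;
    (eapply is_derive_ext; [intros s; symmetry; first [apply E4 | apply (Ha s)]|]);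
    auto_derive; auto; rewrite ?E4; lra.
Qed.

(* A parametrisation of the slice [x2 + x4 = 0], on which [tx2] vanishes. *)
Definition Psi (lam : R) (y : R3) : R4 :=
  (fst (fst y) * / (2 * lam), snd y * (- / lam), snd (fst y), snd y * / lam).

Ltac unfold_coords := unfold tx1, tx2, tx3, tx4, flow, Psi, x1, x2, x3, x4; simpl.

Lemma tx1_flow lam x t : tx1 lam (flow lam x t) = tx1 lam x.
Proof. destruct x as [[[a b] c] d]; unfold_coords; field. Qed.

Lemma tx2_flow lam x t : lam <> 0 -> tx2 lam (flow lam x t) = tx2 lam x + t.
Proof. intros; destruct x as [[[a b] c] d]; unfold_coords; field; assumption. Qed.

Lemma tx3_flow lam x t : tx3 lam (flow lam x t) = tx3 lam x.
Proof. destruct x as [[[a b] c] d]; reflexivity. Qed.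

Lemma tx4_flow lam x t : lam <> 0 -> tx4 lam (flow lam x t) = tx4 lam x.
Proof. intros; destruct x as [[[a b] c] d]; unfold_coords; field; assumption. Qed.

Lemma flow_Psi lam x : lam <> 0 ->
  flow lam (Psi lam (tx1 lam x, tx3 lam x, tx4 lam x)) (tx2 lam x) = x.
Proof.
  intros; destruct x as [[[a b] c] d]; unfold_coords.
  repeat match goal with |- (_, _) = (_, _) => f_equal end; field; assumption.
Qed.

Lemma Ck3_continuous k f : Ck3 k f -> forall y, continuous f y.
Proof. destruct k; simpl; tauto. Qed.

Lemma Ck4_continuous k f : Ck4 k f -> forall x, continuous f x.
Proof. destruct k; simpl; tauto. Qed.

Lemma Ck4_1_of_Ck4_S k f : Ck4 (S k) f -> Ck4 1 f.
Proof.
  intros [Hc [Hex Hpd]]; split; [exact Hc|split; [exact Hex|]].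
  intros i Hi; split; [exact (Ck4_continuous k _ (Hpd i Hi))|exact I].
Qed.

Lemma continuous_lin {U : UniformSpace} (f g : U -> R) a b y :
  continuous f y -> continuous g y -> continuous (fun y => a * f y + b * g y) y.
Proof.
  intros Hf Hg.
  apply (continuous_plus (fun y => a * f y) (fun y => b * g y)).
  - exact (continuous_scal_r a f y Hf).
  - exact (continuous_scal_r b g y Hg).
Qed.

Lemma Ck3_lin k : forall f g a b, Ck3 k f -> Ck3 k g -> Ck3 k (fun y => a * f y + b * g y).
Proof.
  induction k as [|k IH]; intros f g a b Hf Hg.
  - split; [|exact I]; intros y; apply continuous_lin; eapply Ck3_continuous; eassumption.
  - pose proof (Ck3_continuous _ _ Hf) as Cf; pose proof (Ck3_continuous _ _ Hg) as Cg.
    destruct Hf as [_ [Df Pf]], Hg as [_ [Dg Pg]].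
    split; [|split].
    + intros y; apply continuous_lin; auto.
    + intros i y Hi.
      apply (ex_derive_plus (fun t => a * f (set3 i t y)) (fun t => b * g (set3 i t y)));
        apply ex_derive_scal; auto.
    + intros i Hi.
      replace (pd3 i (fun y => a * f y + b * g y)) with (fun y => a * pd3 i f y + b * pd3 i g y);
        [apply IH; auto|].
      apply functional_extensionality; intros y; unfold pd3.
      rewrite Derive_plus, !Derive_scal; [reflexivity|..]; apply ex_derive_scal; auto.
Qed.

Lemma Ck3_scal k a f : Ck3 k f -> Ck3 k (fun y => a * f y).
Proof.
  intros Hf.
  replace (fun y => a * f y) with (fun y => a * f y + 0 * f y)
    by (apply functional_extensionality; intros; ring).
  now apply Ck3_lin.
Qed.

Lemma smooth3_minus f g : smooth3 f -> smooth3 g -> smooth3 (fun y => f y - g y).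
Proof.
  intros Hf Hg k.
  replace (fun y => f y - g y) with (fun y => 1 * f y + -1 * g y)
    by (apply functional_extensionality; intros; ring).
  now apply Ck3_lin.
Qed.

Lemma continuous_Psi lam y : continuous (Psi lam) y.
Proof.
  destruct y as [[a b] c]; unfold Psi.
  repeat apply continuous_pair.
  - apply (continuous_scal_l (fun y : R3 => fst (fst y)) (/ (2 * lam))).
    apply (continuous_comp fst fst); [apply continuous_fst|apply continuous_fst].
  - apply (continuous_scal_l (fun y : R3 => snd y) (- / lam)); apply continuous_snd.
  - apply (continuous_comp fst snd); [apply continuous_fst|apply continuous_snd].
  - apply (continuous_scal_l (fun y : R3 => snd y) (/ lam)); apply continuous_snd.
Qed.

Definition pd3_comp_Psi (lam : R) (j : nat) (f : R4 -> R) (y : R3) : R :=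
  match j with
  | 1%nat => / (2 * lam) * pd4 1 f (Psi lam y)
  | 2%nat => pd4 3 f (Psi lam y)
  | _ => / lam * pd4 4 f (Psi lam y) + - / lam * pd4 2 f (Psi lam y)
  end.

Lemma is_derive_comp_Psi_line lam f j y : Ck4 1 f -> (1 <= j <= 3)%nat ->
  is_derive (fun t => f (Psi lam (set3 j t y))) (coord3 j y) (pd3_comp_Psi lam j f y).
Proof.
  intros Hf Hj; destruct y as [[a b] c].
  destruct j as [|[|[|[|j]]]]; try lia; unfold pd3_comp_Psi, Psi; simpl;
    (eapply is_derive_eq; [|apply is_derive_comp4; [exact Hf|..]; auto_derive; auto; reflexivity]);
    simpl; ring.
Qed.

Lemma Ck3_comp_Psi lam k : forall f, Ck4 k f -> Ck3 k (fun y => f (Psi lam y)).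
Proof.
  assert (Hcont : forall k f y, Ck4 k f -> continuous (fun y => f (Psi lam y)) y)
    by (intros k' f y Hf; apply (continuous_comp (Psi lam) f);
        [apply continuous_Psi|eapply Ck4_continuous; eauto]).
  induction k as [|k IH]; intros f Hf.
  - split; [intros y; eapply Hcont; eauto|exact I].
  - pose proof (Ck4_1_of_Ck4_S _ _ Hf) as Hf1.
    destruct Hf as [_ [_ Hpd]].
    split; [|split].
    + intros y; eapply Hcont; exact Hf1.
    + intros i y Hi; eexists; now apply is_derive_comp_Psi_line.
    + intros i Hi.
      replace (pd3 i (fun y => f (Psi lam y))) with (pd3_comp_Psi lam i f)
        by (apply functional_extensionality; intros y; symmetry;
            now apply is_derive_unique, is_derive_comp_Psi_line).
      destruct i as [|[|[|[|i]]]]; try lia; simpl.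
      * apply Ck3_scal, IH, Hpd; lia.
      * apply IH, Hpd; lia.
      * apply Ck3_lin; apply IH, Hpd; lia.
Qed.

Lemma smooth3_comp_Psi lam f : smooth4 f -> smooth3 (fun y => f (Psi lam y)).
Proof. intros Hf k; exact (Ck3_comp_Psi lam k f (Hf k)). Qed.

Theorem mainTheorem4 (lam : R) (Hlam : lam <> 0) (A : field)
  (HA : forall i, (1 <= i <= 4)%nat -> smooth4 (A i)) :
  (forall i x, (1 <= i <= 4)%nat -> lie (xi_field lam) A i x = 0) <->
  exists C1 C2 C3 B : R3 -> R,
    smooth3 C1 /\ smooth3 C2 /\ smooth3 C3 /\ smooth3 B /\
    forall x : R4,
      let y : R3 := (tx1 lam x, tx3 lam x, tx4 lam x) in
      A 1%nat x = C2 y * tx2 lam x + C3 y /\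
      A 2%nat x = / 2 * C2 y * (tx2 lam x) ^ 2 + C3 y * tx2 lam x + C1 y /\
      A 3%nat x = B y /\
      A 4%nat x = A 2%nat x + C2 y.
Proof.
  rewrite (lie_zero_iff_transport_ode lam A (fun i Hi => HA i Hi 1%nat)).
  split.
  - intros Hode.
    exists (fun y => A 2%nat (Psi lam y)), (fun y => A 4%nat (Psi lam y) - A 2%nat (Psi lam y)),
           (fun y => A 1%nat (Psi lam y)), (fun y => A 3%nat (Psi lam y)).
    split; [|split; [|split; [|split]]];
      try (apply smooth3_minus); try (apply smooth3_comp_Psi, HA; lia).
    intros x; cbv zeta.
    pose proof (transport_ode_solution _ (Hode (Psi lam (tx1 lam x, tx3 lam x, tx4 lam x)))
                  (tx2 lam x)) as Hsol.
    cbv beta zeta in Hsol; rewrite flow_Psi, !flow0 in Hsol by exact Hlam.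
    destruct Hsol as [E1 [E2 [E3 E4]]]; repeat split; lra.
  - intros (C1 & C2 & C3 & B & _ & _ & _ & _ & Hform) p.
    set (y := (tx1 lam p, tx3 lam p, tx4 lam p)).
    apply (transport_ode_of_closed_form (C1 y) (C2 y) (C3 y) (B y) (tx2 lam p)).
    intros t; specialize (Hform (flow lam p t)); cbv zeta in Hform.
    rewrite tx1_flow, tx2_flow, tx3_flow, tx4_flow in Hform by exact Hlam.
    exact Hform.
Qed.
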